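(* Let $C:\{0,1\}^n\to\{0,1\}^m$ be a $(q,\delta,\varepsilon)$ insdel LDC with a non-adaptive decoder $\mathrm{Dec}$ that always queries exactly $q$ positions. Let $\mathcal D$ be any probability distribution over subsets $D\subseteq[2m]$ such that every $D$ in its support satisfies $|D\cap[m]|\le\delta m$ and $|D|\le m$. Then for every $i\in[n]$, if $Q$ is the random query set of $\mathrm{Dec}(\cdot,m,i)$ and $D\sim\mathcal D$ is independent of it, $\Pr[Q^D\in\mathrm{Good}_i]\ge 3\varepsilon/2$.
   Context: $\mathrm{ED}(u,v)$ is the minimum number of insertions and deletions transforming $u$ into $v$. $C$ is a $(q,\delta,\varepsilon)$ insdel LDC ($\varepsilon\in(0,1/2]$) if a randomized $\mathrm{Dec}$ given oracle access to $y\in\{0,1\}^{m'}$, $m'$ and $i\in[n]$ reads at most $q$ symbols and satisfies $\Pr[\mathrm{Dec}(y,m',i)=x_i]\ge1/2+\varepsilon$ whenever $\mathrm{ED}(C(x),y)\le2\delta m$; non-adaptive means its query distribution does not depend on $y$. For $x\in\{0,1\}^n$, $C'(x)\in\{0,1\}^{2m}$ is $C(x)$ followed by $m$ independent uniform random bits. $\mathrm{Good}_i$ is the set of $Q\in\binom{[2m]}{q}$ such that some $f:\{0,1\}^q\to\{0,1\}$ has $\Pr[f(C'(x)_Q)=x_i]\ge1/2+\varepsilon/4$ over uniform $x$ and padded bits. For $D\subseteq[2m]$, $\phi_D:[2m-|D|]\to[2m]$ is $\phi_D(j)=\min\{j'\in[2m]:|[j']\setminus D|\ge j\}$ (the original position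 of the $j$-th surviving symbol after deleting positions in $D$), and for $Q=\{k_0<\dots<k_{q-1}\}\subseteq[m]$ with $|D|\le m$, $Q^D=\{\phi_D(k_0),\dots,\phi_D(k_{q-1})\}$. *)

From mathcomp Require Import all_boot all_order all_algebra.
Set Implicit Arguments. Unset Strict Implicit. Unset Printing Implicit Defensive.
Import Order.TTheory GRing.Theory Num.Theory.
Local Open Scope ring_scope.

Definition insdel_step (u v : seq bool) : Prop :=
  (exists i : nat, (i < size u)%N /\ v = take i u ++ drop i.+1 u) \/
  (exists (i : nat) (b : bool), (i <= size u)%N /\ v = take i u ++ b :: drop i u).

Fixpoint insdel_reach (k : nat) (u v : seq bool) : Prop :=
  match k with
  | 0 => u = v
  | k'.+1 => exists w, insdel_step u w /\ insdel_reach k' w v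
  end.

Definition ED_le (R : realFieldType) (u v : seq bool) (t : R) : Prop :=
  exists k : nat, insdel_reach k u v /\ (k%:R <= t).

Definition ffseq (k : nat) (w : {ffun 'I_k -> bool}) : seq bool :=
  [seq w j | j <- enum 'I_k].

(* One outcome of the decoder's coins on inputs (m', i): a query set Q
   subset of [m'] and an output function of the received word y
   (required to depend only on y restricted to Q). *)
Notation dec_outcome m' :=
  ({set 'I_m'} * {ffun {ffun 'I_m' -> bool} -> bool})%type.

(* a non-adaptive randomized decoder: for each m' and i, a probability
   distribution (independent of y) on outcomes *)
Definition decoder (R : realFieldType) (n : nat) :=
  forall m' : nat, 'I_n -> {ffun dec_outcome m' -> R}.

Definition is_distr (R : realFieldType) (T : finType) (p : {ffun T -> R}) : Prop :=
  (forall t, 0 <= p t) /\ \sum_(t : T) p t = 1.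

Definition dec_prob (R : realFieldType) n (Dec : decoder R n) (m' : nat)
  (i : 'I_n) (y : {ffun 'I_m' -> bool}) (b : bool) : R :=
  \sum_(o : dec_outcome m' | o.2 y == b) Dec m' i o.

Definition insdel_LDC (R : realFieldType) (n m q : nat)
  (C : {ffun 'I_n -> bool} -> {ffun 'I_m -> bool}) (delta eps : R)
  (Dec : decoder R n) : Prop :=
  [/\ forall m' i, is_distr (Dec m' i),
      (forall m' i (o : dec_outcome m'), 0 < Dec m' i o ->
         (#|o.1| <= q)%N /\
         forall y y' : {ffun 'I_m' -> bool},
           (forall j, j \in o.1 -> y j = y' j) -> o.2 y = o.2 y') &
      forall (x : {ffun 'I_n -> bool}) (m' : nat) (y : {ffun 'I_m' -> bool}) (i : 'I_n),
        ED_le (ffseq (C x)) (ffseq y) (2 * delta * m%:R) ->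
        1 / 2 + eps <= dec_prob Dec i y (x i)].

Definition Cpad n m (C : {ffun 'I_n -> bool} -> {ffun 'I_m -> bool})
  (x : {ffun 'I_n -> bool}) (r : {ffun 'I_m -> bool}) : {ffun 'I_(m + m) -> bool} :=
  [ffun j => match split j with inl a => C x a | inr b => r b end].

(* w_S : the symbols of w at the positions of S, in increasing order,
   as an element of {0,1}^q (meaningful when #|S| = q) *)
Definition restr (k q : nat) (w : {ffun 'I_k -> bool}) (S : {set 'I_k}) :
  {ffun 'I_q -> bool} :=
  [ffun t : 'I_q => nth false [seq w j | j <- enum S] t].

Definition Good (R : realFieldType) (n m q : nat)
  (C : {ffun 'I_n -> bool} -> {ffun 'I_m -> bool}) (eps : R) (i : 'I_n)
  (S : {set 'I_(m + m)}) : bool :=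
  (#|S| == q) &&
  [exists f : {ffun {ffun 'I_q -> bool} -> bool},
     1 / 2 + eps / 4 <=
     #|[set xr : {ffun 'I_n -> bool} * {ffun 'I_m -> bool} |
          f (restr q (Cpad C xr.1 xr.2) S) == xr.1 i]|%:R / (2 ^ n * 2 ^ m)%:R].

(* |[j+1] \ D| in 1-indexed terms: positions t <= j (0-indexed) not in D *)
Definition surv (m2 : nat) (D : {set 'I_m2}) (j : nat) : nat :=
  #|[set t : 'I_m2 | (t <= j)%N && (t \notin D)]|.

(* j' = phi_D(k+1) - 1, i.e. j' (0-indexed) is the least position with
   |[j'+1] \ D| >= k+1 *)
Definition phi_is (m2 : nat) (D : {set 'I_m2}) (k : nat) (j' : 'I_m2) : bool :=
  (k.+1 <= surv D j')%N && [forall t : 'I_m2, (t < j')%N ==> (surv D t < k.+1)%N].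

Definition QD (m : nat) (Q : {set 'I_m}) (D : {set 'I_(m + m)}) : {set 'I_(m + m)} :=
  [set j' : 'I_(m + m) | [exists k in Q, phi_is D k j']].

From mathcomp Require Import all_boot all_order all_algebra.
From mathcomp Require Import zify ring lra.
Import Order.TTheory GRing.Theory Num.Theory.
Local Open Scope ring_scope.
Set Implicit Arguments. Unset Strict Implicit. Unset Printing Implicit Defensive.

(* Fix a query outcome [o] of the decoder and a deletion pattern [D].  The word [y]
   made of the first [m] symbols of C'(x) that survive the deletion of [D] is within
   distance 2|D ∩ [m]| <= 2 delta m of C(x): delete D ∩ [m] from C(x), then append
   the missing symbols.  Hence, averaged over x, the padding, [o] and [D], the decoder
   run on [y] recovers x_i with probability at least 1/2 + eps.  Its [k]-th symbol is
   the symbol of C'(x) at phi_D(k), so the decoder's answer is a function of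
   C'(x)_{Q^D}; when Q^D is not Good this function guesses x_i with probability below
   1/2 + eps/4.  With p = Pr[Q^D ∈ Good_i] this gives
   1/2 + eps <= p + (1 - p)(1/2 + eps/4), i.e. p >= 3 eps / (2 - eps) >= 3 eps / 2. *)

Lemma insdel_step_cons x u v : insdel_step u v -> insdel_step (x :: u) (x :: v).
Proof.
case=> [[j [lt_j ->]] | [j [b [le_j ->]]]].
  by left; exists j.+1.
by right; exists j.+1, b.
Qed.

Lemma insdel_reach_cons k x u v :
  insdel_reach k u v -> insdel_reach k (x :: u) (x :: v).
Proof.
elim: k u => [|k IHk] u /=; first by move=> ->.
by case=> w [uw wv]; exists (x :: w); split; [apply: insdel_step_cons | apply: IHk].
Qed.

Lemma insdel_reach_trans a b u v w :
  insdel_reach a u v -> insdel_reach b v w -> insdel_reach (a + b) u w.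
Proof.
elim: a u => [|a IHa] u /=; first by move=> ->.
by case=> z [uz zv] vw; exists z; split => //; apply: IHa zv vw.
Qed.

Lemma insdel_reach_mask (b : bitseq) u :
  size b = size u -> insdel_reach (count negb b) u (mask b u).
Proof.
elim: u b => [|x u IHu] [|[] b] //= [size_b]; first by apply/insdel_reach_cons/IHu.
by exists u; split; [left; exists 0%N; rewrite take0 drop1 | apply: IHu].
Qed.

Lemma insdel_reach_cat u t : insdel_reach (size t) u (u ++ t).
Proof.
elim/last_ind: t => [|t b IHt]; first by rewrite cats0.
rewrite size_rcons -addn1; apply: insdel_reach_trans IHt _.
exists (u ++ rcons t b); split => //; right; exists (size (u ++ t)), b; split => //.
by rewrite take_size drop_size -cats1 catA.
Qed.

(* Delete the symbols of [u] marked [false] in [b1], then append as many symbols of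
   [mask b2 v] as fit. *)
Lemma insdel_reach_take_mask (b1 b2 : bitseq) u v :
  size b1 = size u ->
  exists2 k, insdel_reach k u (take (size u) (mask (b1 ++ b2) (u ++ v)))
           & (k <= 2 * count negb b1)%N.
Proof.
move=> size_b1; rewrite mask_cat //.
have size_M1 : (size (mask b1 u) + count negb b1)%N = size u.
  by rewrite size_mask // count_predC size_b1.
rewrite take_cat ltnNge -size_M1 leq_addr /=.
set t := take _ _.
have size_t : (size t <= count negb b1)%N by rewrite size_take_min; lia.
exists (count negb b1 + size t)%N; last by lia.
exact: insdel_reach_trans (insdel_reach_mask size_b1) (insdel_reach_cat _ t).
Qed.

Lemma count_takeS (T : Type) (a : pred T) (s : seq T) j :
  (count a (take j.+1 s) <= (count a (take j s)).+1)%N.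
Proof.
rewrite -addn1 takeD count_cat -[X in (_ <= X)%N]addn1 leq_add2l.
by apply: leq_trans (count_size _ _) _; rewrite size_take_min geq_minl.
Qed.

Lemma nth_mask_count (T : Type) (x0 : T) (b : bitseq) (w : seq T) k j :
  size b = size w -> (k < count id (take j.+1 b))%N ->
  (forall t, (t < j)%N -> (count id (take t.+1 b) <= k)%N) ->
  nth x0 (mask b w) k = nth x0 w j.
Proof.
elim: b w k j => [|c b IHb] [|x w] k j //= [size_b].
case: j => [|j] /=; first by rewrite take0 addn0; case: c => //; case: k.
move=> lt_k before_j; have := before_j 0%N erefl; rewrite /= take0 addn0 => c_le_k.
have before_j' t : (t < j)%N -> (count id (take t.+1 b) <= k - c)%N.
  by move=> lt_tj; have := before_j t.+1 lt_tj; rewrite /=; lia.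
clear before_j; case: c c_le_k lt_k before_j' => /= c_le_k lt_k before_j'.
  case: k c_le_k lt_k before_j' => [|k] // _ lt_k before_j'.
  rewrite add1n ltnS in lt_k; apply: IHb => // t /before_j'.
  by rewrite subSS subn0.
rewrite add0n in lt_k; apply: IHb => // t /before_j'.
by rewrite subn0.
Qed.

Lemma count_enum (T : finType) (P : pred T) : count P (enum T) = #|P|.
Proof. by rewrite cardE enumT -size_filter /enum_mem. Qed.

Lemma take_enum_ord N j :
  (j <= N)%N -> take j (enum 'I_N) = [seq t : 'I_N <- enum 'I_N | (t < j)%N].
Proof.
move=> le_jN; apply: (inj_map val_inj).
rewrite map_take val_enum_ord take_iota (minn_idPl le_jN).
have -> : [seq val t | t <- [seq t : 'I_N <- enum 'I_N | (t < j)%N]] =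
          [seq v <- [seq val t | t <- enum 'I_N] | (v < j)%N] by rewrite filter_map.
by rewrite val_enum_ord; have := filter_iota_ltn 0 le_jN; rewrite add0n.
Qed.

Lemma enum_ord_add m n :
  enum 'I_(m + n) = map (lshift n) (enum 'I_m) ++ map (@rshift m n) (enum 'I_n).
Proof.
apply: (inj_map val_inj); rewrite map_cat val_enum_ord iotaD.
rewrite -(map_comp val (lshift n)) -(map_comp val (@rshift m n)).
congr (_ ++ _); first by rewrite -val_enum_ord; apply: eq_map.
by rewrite -[m in iota m]addn0 iotaDl -val_enum_ord -map_comp; apply: eq_map.
Qed.

Definition kept N (D : {set 'I_N}) : bitseq := [seq t \notin D | t <- enum 'I_N].

Lemma surv_kept N (D : {set 'I_N}) (j : 'I_N) : surv D j = count id (take j.+1 (kept D)).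
Proof.
rewrite /kept -map_take count_map take_enum_ord // count_filter count_enum.
by apply: eq_card => t; rewrite !inE andbC.
Qed.

Lemma phi_is_uniq N (D : {set 'I_N}) k j1 j2 : phi_is D k j1 -> phi_is D k j2 -> j1 = j2.
Proof.
move=> /andP[le1 /forallP min1] /andP[le2 /forallP min2]; apply: val_inj.
case: (ltngtP j1 j2) => // lt_j.
  by have := min2 j1; rewrite lt_j /= ltnNge le1.
by have := min1 j2; rewrite lt_j /= ltnNge le2.
Qed.

Lemma surv_le_phi_is N (D : {set 'I_N}) k j : phi_is D k j -> (surv D j <= k.+1)%N.
Proof.
move=> /andP[_ /forallP min_j]; rewrite surv_kept.
apply: leq_trans (count_takeS _ _ _) _; case: j min_j => [[|j] lt_j] min_j /=.
  by rewrite take0.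
have lt_j' : (j < N)%N by apply: ltnW.
by have := min_j (Ordinal lt_j'); rewrite /= ltnSn (surv_kept D (Ordinal lt_j')); apply.
Qed.

Lemma phi_is_mono N (D : {set 'I_N}) k1 k2 j1 j2 :
  (k1 < k2)%N -> phi_is D k1 j1 -> phi_is D k2 j2 -> (j1 < j2)%N.
Proof.
move=> lt_k is1 /andP[le2 _]; have le1 := surv_le_phi_is is1.
move: is1 => /andP[_ /forallP min1].
case: (ltngtP j1 j2) => // [lt_j | /val_inj eq_j]; last by move: le1; rewrite eq_j; lia.
by have := min1 j2; rewrite lt_j /=; lia.
Qed.

Lemma sorted_enum_ord_ltn N (A : {set 'I_N}) :
  sorted (fun a b : 'I_N => (a < b)%N) (enum A).
Proof.
rewrite /enum_mem -enumT; apply: sorted_filter; first by move=> b a c; apply: ltn_trans.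
by have := iota_ltn_sorted 0 N; rewrite -val_enum_ord sorted_map.
Qed.

Section Phi.

Variables (m : nat) (D : {set 'I_(m + m)}).

(* The default value [lshift m k] is never used when [#|D| <= m]. *)
Definition phi (k : 'I_m) : 'I_(m + m) := odflt (lshift m k) [pick j | phi_is D k j].

Hypothesis card_D : (#|D| <= m)%N.

Lemma phiP (k : 'I_m) : phi_is D k (phi k).
Proof.
rewrite /phi; case: pickP => [j //| no_phi]; exfalso.
pose P j := (j < m + m)%N && (k.+1 <= surv D j)%N.
have lt_last : ((m + m).-1 < m + m)%N by have := ltn_ord k; lia.
have exP : exists j, P j.
  exists (m + m).-1; rewrite /P lt_last /=.
  have -> : surv D (m + m).-1 = #|~: D|.
    apply: eq_card => t; rewrite !inE; have := ltn_ord t.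
    by case: (t \in D); rewrite ?andbF ?andbT //; lia.
  by have := ltn_ord k; have := cardsC D; rewrite card_ord; lia.
have [j /andP[lt_j le_k] min_j] := ex_minnP exP.
suff : phi_is D k (Ordinal lt_j) by rewrite no_phi.
rewrite /phi_is le_k; apply/forallP => t; apply/implyP => lt_tj; rewrite ltnNge.
by apply/negP => le_kt; have := min_j t; rewrite /P ltn_ord le_kt leqNgt lt_tj => /(_ isT).
Qed.

Lemma phi_homo : {homo phi : k1 k2 / (k1 < k2)%N}.
Proof. by move=> k1 k2 lt_k; apply: phi_is_mono lt_k (phiP k1) (phiP k2). Qed.

Lemma phi_inj : injective phi.
Proof.
move=> k1 k2 eq_phi; apply: val_inj.
by case: (ltngtP k1 k2) => // /phi_homo; rewrite eq_phi ltnn.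
Qed.

Lemma QD_imset (Q : {set 'I_m}) : QD Q D = phi @: Q.
Proof.
apply/setP => j; rewrite inE; apply/existsP/imsetP => [[k /andP[kQ phi_kj]] | [k kQ ->]].
  by exists k => //; apply: phi_is_uniq phi_kj (phiP k).
by exists k; rewrite kQ phiP.
Qed.

Lemma enum_imset_phi (Q : {set 'I_m}) : enum (phi @: Q) = map phi (enum Q).
Proof.
apply: (@irr_sorted_eq _ (fun a b : 'I_(m + m) => (a < b)%N)).
- by move=> b a c; apply: ltn_trans.
- by move=> a; apply: ltnn.
- exact: sorted_enum_ord_ltn.
- rewrite sorted_map; apply: sub_sorted (sorted_enum_ord_ltn Q) => a b.
  exact: phi_homo.
- move=> j; rewrite mem_enum; apply/imsetP/mapP => -[k kQ ->]; exists k => //;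
  by rewrite ?mem_enum in kQ *.
Qed.

Lemma restr_QD q (w : {ffun 'I_(m + m) -> bool}) (Q : {set 'I_m}) :
  restr q w (QD Q D) = [ffun t : 'I_q => nth false [seq w (phi k) | k <- enum Q] t].
Proof. by rewrite /restr QD_imset enum_imset_phi -map_comp. Qed.

End Phi.

Lemma nth_ffseq N (w : {ffun 'I_N -> bool}) (j : 'I_N) : nth false (ffseq w) j = w j.
Proof. by rewrite /ffseq (nth_map j) ?size_enum_ord // nth_ord_enum. Qed.

Lemma count_kept N (D : {set 'I_N}) : count id (kept D) = #|~: D|.
Proof. by rewrite count_map count_enum; apply: eq_card => t; rewrite !inE. Qed.

Definition deleted m (D : {set 'I_(m + m)}) (w : {ffun 'I_(m + m) -> bool}) :
  {ffun 'I_m -> bool} := [ffun k => w (phi D k)].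

Lemma ffseq_deleted m (D : {set 'I_(m + m)}) (w : {ffun 'I_(m + m) -> bool}) :
  (#|D| <= m)%N -> ffseq (deleted D w) = take m (mask (kept D) (ffseq w)).
Proof.
move=> card_D; have size_kept : size (kept D) = size (ffseq w) by rewrite !size_map.
apply: (@eq_from_nth _ false) => [|k].
  rewrite size_map size_enum_ord size_takel // size_mask // count_kept.
  by have := cardsC D; rewrite card_ord; lia.
rewrite size_map size_enum_ord => lt_km.
have -> : k = Ordinal lt_km by [].
rewrite nth_ffseq nth_take // ffunE -nth_ffseq.
have /andP[le_k /forallP min_k] := phiP card_D (Ordinal lt_km).
symmetry; apply: nth_mask_count => //; first by rewrite -surv_kept.
move=> t lt_t; have lt_tm : (t < m + m)%N by apply: ltn_trans lt_t (ltn_ord _).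
by have := min_k (Ordinal lt_tm); rewrite /= lt_t (surv_kept D (Ordinal lt_tm)).
Qed.

Lemma ffseq_Cpad n m (C : {ffun 'I_n -> bool} -> {ffun 'I_m -> bool}) x r :
  ffseq (Cpad C x r) = ffseq (C x) ++ ffseq r.
Proof.
rewrite /ffseq enum_ord_add map_cat -!map_comp.
congr (_ ++ _); apply: eq_map => a.
  by rewrite /= ffunE (unsplitK (inl a)).
by rewrite /= ffunE (unsplitK (inr a)).
Qed.

Lemma kept_cat m (D : {set 'I_(m + m)}) :
  kept D = [seq lshift m a \notin D | a <- enum 'I_m] ++
           [seq rshift m a \notin D | a <- enum 'I_m].
Proof. by rewrite /kept enum_ord_add map_cat -!map_comp. Qed.

Lemma count_kept_lshift m (D : {set 'I_(m + m)}) :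
  count negb [seq lshift m a \notin D | a <- enum 'I_m] =
  #|D :&: [set j : 'I_(m + m) | (j < m)%N]|.
Proof.
rewrite count_map count_enum -(card_imset _ (@lshift_inj m m)).
apply: eq_card => j; rewrite !inE; apply/imsetP/andP => [[a aD ->] | [jD lt_jm]].
  by move: aD; rewrite inE /= negbK.
have lshift_j : lshift m (Ordinal lt_jm) = j by apply: val_inj.
by exists (Ordinal lt_jm); rewrite ?inE /= ?negbK lshift_j.
Qed.

Lemma ED_le_deleted_Cpad (R : realFieldType) n m
    (C : {ffun 'I_n -> bool} -> {ffun 'I_m -> bool}) (delta : R)
    (D : {set 'I_(m + m)}) x r :
  (#|D| <= m)%N -> #|D :&: [set j : 'I_(m + m) | (j < m)%N]|%:R <= delta * m%:R ->
  ED_le (ffseq (C x)) (ffseq (deleted D (Cpad C x r))) (2 * delta * m%:R).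
Proof.
move=> card_D le_delta; rewrite ffseq_deleted // ffseq_Cpad kept_cat.
set b1 := [seq _ | a <- _]; set b2 := [seq _ | a <- _].
have size_Cx : size (ffseq (C x)) = m by rewrite size_map size_enum_ord.
have size_b1 : size b1 = size (ffseq (C x)) by rewrite !size_map.
have [k reach le_k] := insdel_reach_take_mask b2 (ffseq r) size_b1.
exists k; split; first by rewrite size_Cx in reach.
apply: le_trans (_ : (2 * count negb b1)%:R <= _); first by rewrite ler_nat.
by rewrite natrM -mulrA ler_pM2l // count_kept_lshift.
Qed.

Lemma map_nth_enum_ord (T : Type) (x0 : T) q (s : seq T) :
  size s = q -> [seq nth x0 s t | t : 'I_q <- enum 'I_q] = s.
Proof.
move=> size_s; rewrite -[RHS]take_size -(map_nth_iota0 x0) //.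
by rewrite -val_enum_ord -map_comp size_s; apply: eq_map.
Qed.

Lemma local_decision_restr_QD m q (D : {set 'I_(m + m)}) (Q : {set 'I_m})
    (g : {ffun 'I_m -> bool} -> bool) :
  (#|D| <= m)%N -> #|Q| = q ->
  (forall y y' : {ffun 'I_m -> bool}, (forall k, k \in Q -> y k = y' k) -> g y = g y') ->
  exists f : {ffun {ffun 'I_q -> bool} -> bool},
    forall w, f (restr q w (QD Q D)) = g (deleted D w).
Proof.
move=> card_D card_Q g_local.
pose unrestr (z : {ffun 'I_q -> bool}) : {ffun 'I_m -> bool} :=
  [ffun k => nth false [seq z t | t <- enum 'I_q] (index k (enum Q))].
exists [ffun z => g (unrestr z)] => w; rewrite ffunE restr_QD //.
apply: g_local => k kQ; rewrite ffunE; under eq_map => t do rewrite ffunE.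
rewrite map_nth_enum_ord; last by rewrite size_map -cardE.
by rewrite (nth_map k) ?index_mem ?mem_enum // nth_index ?mem_enum // ffunE.
Qed.

Lemma sum_indicator (R : realFieldType) (T : finType) (P : pred T) :
  \sum_(t : T) (P t)%:R = #|[set t | P t]|%:R :> R.
Proof.
rewrite (bigID P) /= [X in _ + X]big1 => [|t /negbTE -> //]; rewrite addr0.
rewrite (eq_bigr (fun _ => 1)) => [|t -> //]; rewrite sumr_const.
by congr (_ *+ _); apply: eq_card => t; rewrite inE.
Qed.

Definition successes n m (C : {ffun 'I_n -> bool} -> {ffun 'I_m -> bool})
    (D : {set 'I_(m + m)}) (g : {ffun 'I_m -> bool} -> bool) (i : 'I_n) : nat :=
  #|[set xr : {ffun 'I_n -> bool} * {ffun 'I_m -> bool} |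
       g (deleted D (Cpad C xr.1 xr.2)) == xr.1 i]|.

Section Averaging.

Variables (R : realFieldType) (n m q : nat) (delta eps : R).
Variables (C : {ffun 'I_n -> bool} -> {ffun 'I_m -> bool}) (Dec : decoder R n).
Variables (pD : {ffun {set 'I_(m + m)} -> R}) (i : 'I_n).

Hypothesis LDC : insdel_LDC q C delta eps Dec.
Hypothesis pD_distr : is_distr pD.
Hypothesis pD_support : forall D, 0 < pD D ->
  #|D :&: [set j : 'I_(m + m) | (j < m)%N]|%:R <= delta * m%:R /\ (#|D| <= m)%N.

Local Notation N := (2 ^ n * 2 ^ m)%N.

Lemma card_samples : #|{: {ffun 'I_n -> bool} * {ffun 'I_m -> bool}}| = N.
Proof. by rewrite card_prod !card_ffun !card_bool !card_ord. Qed.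

Lemma expected_successes_ge :
  (1 / 2 + eps) * N%:R <=
  \sum_(o : dec_outcome m) \sum_(D : {set 'I_(m + m)})
     Dec m i o * pD D * (successes C D o.2 i)%:R.
Proof.
have [_ _ Dec_correct] := LDC; have [pD_ge0 pD_sum1] := pD_distr.
under eq_bigr => o _ do under eq_bigr => D _ do
  rewrite -sum_indicator mulr_sumr.
rewrite exchange_big /=; under eq_bigr => D _ do rewrite exchange_big /=.
rewrite exchange_big /= -card_samples mulr_natr -sumr_const.
apply: ler_sum => -[x r] _.
have <- : \sum_D pD D * (1 / 2 + eps) = 1 / 2 + eps by rewrite -mulr_suml pD_sum1 mul1r.
apply: ler_sum => D _.
have -> : \sum_o Dec m i o * pD D * (o.2 (deleted D (Cpad C x r)) == x i)%:R =
          pD D * dec_prob Dec i (deleted D (Cpad C x r)) (x i).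
  rewrite /dec_prob mulr_sumr [RHS]big_mkcond; apply: eq_bigr => o _ /=.
  by case: (_ == _); rewrite ?mulr1 ?mulr0 // mulrC.
have [-> | pD_neq0] := eqVneq (pD D) 0; first by rewrite !mul0r.
have pD_gt0 : 0 < pD D by rewrite lt_def pD_neq0 pD_ge0.
have [le_delta card_D] := pD_support pD_gt0.
by rewrite ler_wpM2l //; apply: Dec_correct; apply: ED_le_deleted_Cpad.
Qed.

Lemma successes_lt_not_Good (D : {set 'I_(m + m)}) (Q : {set 'I_m})
    (g : {ffun 'I_m -> bool} -> bool) :
  (#|D| <= m)%N -> #|Q| = q ->
  (forall y y' : {ffun 'I_m -> bool}, (forall k, k \in Q -> y k = y' k) -> g y = g y') ->
  ~~ Good q C eps i (QD Q D) -> (successes C D g i)%:R < (1 / 2 + eps / 4) * N%:R.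
Proof.
move=> card_D card_Q g_local.
have [f f_restr] := local_decision_restr_QD card_D card_Q g_local.
have card_QD : #|QD Q D| = q by rewrite QD_imset // card_imset //; apply: phi_inj.
rewrite /Good card_QD eqxx /= => /existsPn /(_ f).
rewrite -ltNge ltr_pdivrMr ?ltr0n ?muln_gt0 ?expn_gt0 //.
suff -> : successes C D g i =
  #|[set xr : {ffun 'I_n -> bool} * {ffun 'I_m -> bool} |
       f (restr q (Cpad C xr.1 xr.2) (QD Q D)) == xr.1 i]| by [].
by apply: eq_card => xr; rewrite !inE f_restr.
Qed.

Hypothesis query_q : forall o : dec_outcome m, 0 < Dec m i o -> #|o.1| = q.

Lemma successes_le_Good o D : 0 < Dec m i o -> 0 < pD D ->
  (successes C D o.2 i)%:R <=
  N%:R * ((Good q C eps i (QD o.1 D))%:R * (1 / 2 - eps / 4) + (1 / 2 + eps / 4)).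
Proof.
move=> Dec_gt0 pD_gt0; have [_ Dec_local _] := LDC; have [_ card_D] := pD_support pD_gt0.
case: (boolP (Good _ _ _ _ _)) => [_ | not_Good] /=.
  have -> : 1 * (1 / 2 - eps / 4) + (1 / 2 + eps / 4) = 1 :> R by lra.
  by rewrite mulr1 -card_samples ler_nat max_card.
rewrite mul0r add0r mulrC; apply/ltW/(successes_lt_not_Good card_D (query_q Dec_gt0)) => //.
by have [_] := Dec_local m i o Dec_gt0.
Qed.

Lemma expected_successes_le :
  \sum_(o : dec_outcome m) \sum_(D : {set 'I_(m + m)})
     Dec m i o * pD D * (successes C D o.2 i)%:R <=
  N%:R * ((1 / 2 - eps / 4) *
    \sum_(o : dec_outcome m) \sum_(D : {set 'I_(m + m)})
       Dec m i o * pD D * (Good q C eps i (QD o.1 D))%:R + (1 / 2 + eps / 4)).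
Proof.
have [Dec_distr _ _] := LDC; have [Dec_ge0 Dec_sum1] := Dec_distr m i.
have [pD_ge0 pD_sum1] := pD_distr.
pose G (o : dec_outcome m) (D : {set 'I_(m + m)}) : R := (Good q C eps i (QD o.1 D))%:R.
apply: (@le_trans _ _ (\sum_(o : dec_outcome m) \sum_(D : {set 'I_(m + m)})
    Dec m i o * pD D * (N%:R * (G o D * (1 / 2 - eps / 4) + (1 / 2 + eps / 4))))).
  apply: ler_sum => o _; apply: ler_sum => D _.
  have [-> | Dec_neq0] := eqVneq (Dec m i o) 0; first by rewrite !mul0r.
  have [-> | pD_neq0] := eqVneq (pD D) 0; first by rewrite mulr0 !mul0r.
  rewrite ler_wpM2l ?mulr_ge0 //; apply: successes_le_Good.
    by rewrite lt_def Dec_neq0 Dec_ge0.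
  by rewrite lt_def pD_neq0 pD_ge0.
have split_term o D :
    Dec m i o * pD D * (N%:R * (G o D * (1 / 2 - eps / 4) + (1 / 2 + eps / 4))) =
    N%:R * (1 / 2 - eps / 4) * (Dec m i o * pD D * G o D) +
    N%:R * (1 / 2 + eps / 4) * (Dec m i o * pD D) by ring.
under eq_bigr => o _ do under eq_bigr => D _ do rewrite split_term.
under eq_bigr => o _ do rewrite big_split -!mulr_sumr pD_sum1 mulr1.
rewrite big_split /= -!mulr_sumr Dec_sum1 mulr1 /G le_eqVlt; apply/orP; left.
by apply/eqP; ring.
Qed.

End Averaging.

Theorem mainTheorem11 (R : realFieldType) (n m q : nat)
  (C : {ffun 'I_n -> bool} -> {ffun 'I_m -> bool}) (delta eps : R)
  (Dec : decoder R n) :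
  0 < eps -> eps <= 1 / 2 ->
  insdel_LDC q C delta eps Dec ->
  (forall (i : 'I_n) (o : dec_outcome m), 0 < Dec m i o -> #|o.1| = q) ->
  forall pD : {ffun {set 'I_(m + m)} -> R},
  is_distr pD ->
  (forall D, 0 < pD D ->
     (#|D :&: [set j : 'I_(m + m) | (j < m)%N]|%:R <= delta * m%:R) /\
     (#|D| <= m)%N) ->
  forall i : 'I_n,
    3 * eps / 2 <=
    \sum_(o : dec_outcome m) \sum_(D : {set 'I_(m + m)})
       Dec m i o * pD D * (Good q C eps i (QD o.1 D))%:R.
Proof.
move=> eps_gt0 eps_le_half LDC query_q pD pD_distr pD_support i.
set S := \sum_(o : dec_outcome m) _.
have S_ge0 : 0 <= S.
  have [Dec_distr _ _] := LDC; have [[Dec_ge0 _] [pD_ge0 _]] := (Dec_distr m i, pD_distr).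
  by apply: sumr_ge0 => o _; apply: sumr_ge0 => D _; rewrite !mulr_ge0.
have := le_trans (expected_successes_ge i LDC pD_distr pD_support)
                 (expected_successes_le LDC pD_distr pD_support (query_q i)).
rewrite mulrC ler_pM2l ?ltr0n ?muln_gt0 ?expn_gt0 // => success_bound.
rewrite -/S in success_bound; nra.
Qed.
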